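(* The metric space $(\mathcal M/\!\sim,d_{\mathrm{GH}})$ is a geodesic space: for any $[X],[Y]\in\mathcal M/\!\sim$ there exists a continuous curve $\gamma:[0,1]\to\mathcal M/\!\sim$ with $\gamma(0)=[X]$, $\gamma(1)=[Y]$ and $d_{\mathrm{GH}}(\gamma(s),\gamma(t))=|t-s|\,d_{\mathrm{GH}}([X],[Y])$ for all $s,t\in[0,1]$.
   Context: $\mathcal M$ is the collection of compact metric spaces; $X\sim Y$ iff $X$ and $Y$ are isometric, and $d_{\mathrm{GH}}([X],[Y]):=d_{\mathrm{GH}}(X,Y)$. Here $d_{\mathrm{GH}}(X,Y)=\tfrac12\inf_{R}\operatorname{dis}(R)$, the infimum over all correspondences $R\subseteq X\times Y$ (relations whose projections onto $X$ and $Y$ are surjective), with $\operatorname{dis}(R)=\sup_{(x,y),(x',y')\in R}|d_X(x,x')-d_Y(y,y')|$. *)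

From Stdlib Require Import Reals Lra ClassicalEpsilon.
Open Scope R_scope.

Record CMS : Type := {
  carrier :> Type;
  dist : carrier -> carrier -> R;
  dist_nonneg : forall x y, 0 <= dist x y;
  dist_eq0 : forall x y, dist x y = 0 <-> x = y;
  dist_sym : forall x y, dist x y = dist y x;
  dist_tri : forall x y z, dist x z <= dist x y + dist y z;
  cms_inhabited : inhabited carrier;
  cms_compact : forall u : nat -> carrier,
      exists (phi : nat -> nat) (l : carrier),
        (forall n, (phi n < phi (S n))%nat) /\
        (forall eps, eps > 0 -> exists N, forall n, (n >= N)%nat ->
             dist (u (phi n)) l < eps)
}.

Arguments dist {c} _ _.

Definition isometric (X Y : CMS) : Prop :=
  exists f : X -> Y,
    (forall x x', dist (f x) (f x') = dist x x') /\
    (forall y : Y, exists x, f x = y).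

Definition correspondence (X Y : CMS) (Rl : X -> Y -> Prop) : Prop :=
  (forall x : X, exists y : Y, Rl x y) /\ (forall y : Y, exists x : X, Rl x y).

Definition is_glb (E : R -> Prop) (m : R) : Prop :=
  (forall x, E x -> m <= x) /\ (forall b, (forall x, E x -> b <= x) -> b <= m).

Definition distortion (X Y : CMS) (Rl : X -> Y -> Prop) : R :=
  epsilon (inhabits 0) (fun s => is_lub (fun v => exists x y x' y',
     Rl x y /\ Rl x' y' /\ v = Rabs (dist x x' - dist y y')) s).

Definition dGH (X Y : CMS) : R :=
  epsilon (inhabits 0) (fun m => is_glb (fun v => exists Rl,
     correspondence X Y Rl /\ v = distortion X Y Rl / 2) m).

From Stdlib Require Import Rbase Rbasic_fun Lra Lia ClassicalEpsilon ProofIrrelevance List Cantor.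
Open Scope R_scope.

(* By compactness there is an optimal correspondence C between X and Y: a closed
   correspondence of distortion exactly 2 d_GH(X, Y), obtained as the lower limit of
   near-optimal correspondences along a diagonal subsequence.  For 0 < t < 1 the graph
   of C with the metric (1 - t) d_X + t d_Y is a compact space Z_t, and Z_0 = X,
   Z_1 = Y.  All Z_t are parametrized by the same set C, and their distances differ by
   |t - s| |d_X - d_Y|, whence d_GH(Z_s, Z_t) <= |t - s| d_GH(X, Y); the triangle
   inequality through X and Y turns these bounds into equalities. *)

Definition converges (K : CMS) (u : nat -> K) (l : K) : Prop :=
  forall eps, eps > 0 -> exists N, forall n, (n >= N)%nat -> dist (u n) l < eps.

Definition strictly_increasing (phi : nat -> nat) : Prop :=
  forall n, (phi n < phi (S n))%nat.

Lemma strictly_increasing_lt phi : strictly_increasing phi ->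
  forall m n, (m < n)%nat -> (phi m < phi n)%nat.
Proof. intros Hphi m n Hmn; induction Hmn; [apply Hphi|]. specialize (Hphi m0); lia. Qed.

Lemma strictly_increasing_ge phi : strictly_increasing phi -> forall n, (n <= phi n)%nat.
Proof. intros Hphi n; induction n; [lia|]. specialize (Hphi n); lia. Qed.

Lemma strictly_increasing_comp phi psi :
  strictly_increasing phi -> strictly_increasing psi -> strictly_increasing (fun n => phi (psi n)).
Proof. intros Hphi Hpsi n. apply strictly_increasing_lt; auto. Qed.

Lemma converges_subseq (K : CMS) (u : nat -> K) l (s : nat -> nat) :
  converges K u l -> (forall n, (n <= s n)%nat) -> converges K (fun n => u (s n)) l.
Proof.
  intros Hu Hs eps He; destruct (Hu eps He) as [N HN]; exists N; intros n Hn.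
  apply HN; specialize (Hs n); lia.
Qed.

Lemma dist_tri_sym (K : CMS) (x y z : K) : dist x z <= dist y x + dist y z.
Proof. rewrite (dist_sym K y x); apply dist_tri. Qed.

Lemma Rabs_dist_sub_le (K : CMS) (x x' p p' : K) :
  Rabs (dist x x' - dist p p') <= dist x p + dist x' p'.
Proof.
  pose proof (dist_tri K x p x'); pose proof (dist_tri K p p' x');
  pose proof (dist_tri K p x p'); pose proof (dist_tri K x x' p');
  pose proof (dist_sym K x p); pose proof (dist_sym K x' p').
  apply Rabs_le; lra.
Qed.

Lemma inv_INR_succ_pos n : 0 < / (INR n + 1).
Proof. apply Rinv_0_lt_compat; pose proof (pos_INR n); lra. Qed.

Lemma eventually_INR_gt r : exists N, forall n, (n >= N)%nat -> INR n > r.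
Proof. destruct (INR_unbounded r) as [N HN]. exists N; intros n Hn. apply le_INR in Hn; lra. Qed.

Lemma eventually_inv_INR_succ_lt eta :
  eta > 0 -> exists N, forall n, (n >= N)%nat -> / (INR n + 1) < eta.
Proof.
  intros He. destruct (eventually_INR_gt (/ eta)) as [N HN]. exists N; intros n Hn.
  specialize (HN n Hn). pose proof (Rinv_0_lt_compat eta He).
  rewrite <- (Rinv_inv eta). apply Rinv_lt_contravar; [apply Rmult_lt_0_compat|]; lra.
Qed.

Lemma cms_bounded (K : CMS) : exists M, forall x y : K, dist x y <= M.
Proof.
  destruct (cms_inhabited K) as [x0].
  assert (Hball : exists M, forall y : K, dist x0 y <= M).
  { apply NNPP; intro Hunbounded.
    assert (Hfar : forall n : nat, exists y : K, dist x0 y > INR n).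
    { intro n. apply NNPP; intro Hn. apply Hunbounded. exists (INR n). intro y.
      apply Rnot_lt_le; intro; apply Hn; exists y; lra. }
    destruct (choice _ Hfar) as [u Hu].
    destruct (cms_compact K u) as (phi & l & Hphi & Hl).
    destruct (Hl 1 ltac:(lra)) as [N1 HN1].
    destruct (eventually_INR_gt (dist x0 l + 1)) as [N2 HN2].
    set (n := max N1 N2). specialize (HN1 n ltac:(lia)). specialize (HN2 n ltac:(lia)).
    pose proof (le_INR _ _ (strictly_increasing_ge phi Hphi n)).
    pose proof (Hu (phi n)). pose proof (dist_tri K x0 l (u (phi n))).
    rewrite (dist_sym K l) in *. lra. }
  destruct Hball as [M HM]; exists (M + M); intros x y.
  pose proof (dist_tri_sym K x x0 y); pose proof (HM x); pose proof (HM y); lra.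
Qed.

Lemma cms_finite_net (K : CMS) eps : eps > 0 ->
  exists L : list K, forall x, exists z, In z L /\ dist x z < eps.
Proof.
  intros He. apply NNPP; intro Hnone.
  assert (Hfar : forall L : list K, exists x, forall z, In z L -> dist x z >= eps).
  { intro L. apply NNPP; intro Hc. apply Hnone. exists L. intro x.
    apply NNPP; intro Hc2. apply Hc. exists x. intros z Hz.
    apply Rnot_lt_ge; intro; apply Hc2; exists z; auto. }
  destruct (choice _ Hfar) as [next Hnext].
  set (build := fix build (n : nat) : list K :=
         match n with O => nil | S m => next (build m) :: build m end).
  set (u := fun n => next (build n)).
  assert (Hin : forall m n, (m < n)%nat -> In (u m) (build n)).
  { intros m n Hmn; induction Hmn; simpl; auto. }
  (* the points u n are pairwise eps-apart, so no subsequence converges *)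
  destruct (cms_compact K u) as (phi & l & Hphi & Hl).
  destruct (Hl (eps / 2) ltac:(lra)) as [N HN].
  pose proof (HN N ltac:(lia)); pose proof (HN (S N) ltac:(lia)).
  pose proof (Hnext _ _ (Hin _ _ (Hphi N))).
  pose proof (dist_tri K (u (phi (S N))) l (u (phi N))).
  rewrite (dist_sym K l) in *. fold (u (phi (S N))) in *. lra.
Qed.

Lemma cms_dense_seq (K : CMS) :
  exists a : nat -> K, forall x eps, eps > 0 -> exists i, dist x (a i) < eps.
Proof.
  destruct (cms_inhabited K) as [x0].
  destruct (choice _ (fun k : nat => cms_finite_net K _ (inv_INR_succ_pos k))) as [net Hnet].
  exists (fun n => let (k, i) := of_nat n in nth i (net k) x0).
  intros x eps He. destruct (eventually_inv_INR_succ_lt eps He) as [N HN].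
  destruct (Hnet N x) as (z & Hz & Hd).
  destruct (In_nth _ _ x0 Hz) as (i & _ & Hi).
  exists (to_nat (N, i)). rewrite cancel_of_to, Hi. specialize (HN N (le_n _)). lra.
Qed.

Section Diagonal.

Variable K : CMS.
Variable extract : (nat -> K) -> nat -> nat.
Hypothesis extract_increasing : forall u, strictly_increasing (extract u).
Hypothesis extract_converges : forall u, exists l, converges K (fun n => u (extract u n)) l.
Variable v : nat -> nat -> K.

Fixpoint nested_extraction (k : nat) : nat -> nat :=
  match k with
  | O => fun n => n
  | S k => fun n => nested_extraction k (extract (fun m => v k (nested_extraction k m)) n)
  end.

Lemma nested_extraction_tail k j : (k <= j)%nat ->
  forall n, exists m, (n <= m)%nat /\ nested_extraction j n = nested_extraction k m.
Proof.
  induction 1 as [|j _ IH]; intro n; [exists n; auto|].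
  set (m1 := extract (fun m => v j (nested_extraction j m)) n).
  destruct (IH m1) as (m2 & Hm2 & E).
  exists m2; split; [|exact E].
  pose proof (strictly_increasing_ge _
                (extract_increasing (fun m => v j (nested_extraction j m))) n).
  unfold m1 in *; lia.
Qed.

Lemma diagonal_converges i : exists l, converges K (fun n => v i (nested_extraction n n)) l.
Proof.
  destruct (extract_converges (fun m => v i (nested_extraction i m))) as [l Hl].
  exists l; intros eps He. destruct (Hl eps He) as [N HN].
  exists (max N (S i)); intros n Hn.
  destruct (nested_extraction_tail (S i) n ltac:(lia) n) as (m & Hm & ->).
  apply HN; lia.
Qed.

End Diagonal.

Lemma diagonal_extraction (K : CMS) (v : nat -> nat -> K) :
  exists (e : nat -> nat) (l : nat -> K),
    (forall n, (n <= e n)%nat) /\ forall i, converges K (fun n => v i (e n)) (l i).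
Proof.
  destruct (choice (fun u phi => strictly_increasing phi /\
                      exists l, converges K (fun n => u (phi n)) l)) as [extract Hextract].
  { intro u. destruct (cms_compact K u) as (phi & l & Hphi & Hl). exists phi; eauto. }
  pose proof (fun u => proj1 (Hextract u)) as Hincr.
  pose proof (fun u => proj2 (Hextract u)) as Hconv.
  destruct (choice _ (diagonal_converges K extract Hincr Hconv v)) as [l Hl].
  exists (fun n => nested_extraction K extract v n n), l; split; [|exact Hl].
  intro n. destruct (nested_extraction_tail K extract Hincr v 0 n ltac:(lia) n) as (m & Hm & ->).
  exact Hm.
Qed.

Lemma distortion_is_lub (X Y : CMS) C : correspondence X Y C ->
  is_lub (fun v => exists x y x' y', C x y /\ C x' y' /\ v = Rabs (dist x x' - dist y y'))
    (distortion X Y C).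
Proof.
  intros [HX _]. unfold distortion. apply epsilon_spec.
  destruct (cms_bounded X) as [MX HMX]; destruct (cms_bounded Y) as [MY HMY].
  destruct (completeness (fun v => exists x y x' y', C x y /\ C x' y' /\
                            v = Rabs (dist x x' - dist y y'))) as [m Hm]; [| |exists m; exact Hm].
  - exists (MX + MY). intros v (x & y & x' & y' & _ & _ & ->).
    pose proof (HMX x x'); pose proof (HMY y y');
    pose proof (dist_nonneg X x x'); pose proof (dist_nonneg Y y y').
    apply Rabs_le; lra.
  - destruct (cms_inhabited X) as [x]. destruct (HX x) as [y Hy]. do 5 eexists; eauto.
Qed.

Lemma distortion_ge (X Y : CMS) C : correspondence X Y C ->
  forall x y x' y', C x y -> C x' y' -> Rabs (dist x x' - dist y y') <= distortion X Y C.
Proof. intros HC x y x' y' H H'. apply (distortion_is_lub X Y C HC). do 4 eexists; eauto. Qed.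

Lemma distortion_le (X Y : CMS) C D : correspondence X Y C ->
  (forall x y x' y', C x y -> C x' y' -> Rabs (dist x x' - dist y y') <= D) ->
  distortion X Y C <= D.
Proof.
  intros HC HD. apply (distortion_is_lub X Y C HC).
  intros v (x & y & x' & y' & H & H' & ->); auto.
Qed.

Lemma distortion_nonneg (X Y : CMS) C : correspondence X Y C -> 0 <= distortion X Y C.
Proof.
  intros HC. destruct (cms_inhabited X) as [x]. destruct (proj1 HC x) as [y Hy].
  eapply Rle_trans; [apply Rabs_pos | apply (distortion_ge X Y C HC x y x y Hy Hy)].
Qed.

Lemma dGH_is_glb (X Y : CMS) :
  is_glb (fun v => exists C, correspondence X Y C /\ v = distortion X Y C / 2) (dGH X Y).
Proof.
  unfold dGH. apply epsilon_spec.
  destruct (completeness (fun v => exists C, correspondence X Y C /\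
                            - v = distortion X Y C / 2)) as [m [Hub Hleast]].
  - exists 0. intros v (C & HC & Hv). pose proof (distortion_nonneg X Y C HC). lra.
  - exists (- (distortion X Y (fun _ _ => True) / 2)), (fun _ _ => True). split; [|lra].
    destruct (cms_inhabited X) as [x]; destruct (cms_inhabited Y) as [y].
    split; intro; eauto.
  - exists (- m). split.
    + intros v Hv. enough (- v <= m) by lra. apply Hub. now rewrite Ropp_involutive.
    + intros b Hb. enough (m <= - b) by lra. apply Hleast. intros v Hv. specialize (Hb _ Hv). lra.
Qed.

Lemma dGH_le_distortion (X Y : CMS) C : correspondence X Y C -> dGH X Y <= distortion X Y C / 2.
Proof. intros HC. apply (dGH_is_glb X Y). eauto. Qed.

Lemma dGH_nonneg (X Y : CMS) : 0 <= dGH X Y.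
Proof.
  apply (dGH_is_glb X Y). intros v (C & HC & ->). pose proof (distortion_nonneg X Y C HC). lra.
Qed.

Lemma dGH_near_optimal (X Y : CMS) eps : eps > 0 -> exists C, correspondence X Y C /\
  forall x y x' y', C x y -> C x' y' -> Rabs (dist x x' - dist y y') <= 2 * dGH X Y + eps.
Proof.
  intros He. apply NNPP; intro Hnone.
  enough (dGH X Y + eps / 2 <= dGH X Y) by lra.
  apply (dGH_is_glb X Y). intros v (C & HC & ->).
  apply Rnot_lt_le; intro Hlt. apply Hnone. exists C; split; auto.
  intros x y x' y' H H'. pose proof (distortion_ge X Y C HC x y x' y' H H'). lra.
Qed.

(* The graph of two surjections from a common set is a correspondence. *)
Lemma dGH_le_of_surjections (X Y : CMS) (S : Type) (f : S -> X) (g : S -> Y) D :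
  (forall x, exists p, f p = x) -> (forall y, exists p, g p = y) ->
  (forall p q, Rabs (dist (f p) (f q) - dist (g p) (g q)) <= D) -> dGH X Y <= D / 2.
Proof.
  intros Hf Hg HD.
  set (C := fun x y => exists p, f p = x /\ g p = y).
  assert (HC : correspondence X Y C).
  { split; [intro x; destruct (Hf x) as [p <-] | intro y; destruct (Hg y) as [p <-]];
      eexists; exists p; eauto. }
  enough (distortion X Y C <= D) by (pose proof (dGH_le_distortion X Y C HC); lra).
  apply distortion_le; auto. intros x y x' y' (p & <- & <-) (q & <- & <-). apply HD.
Qed.

Lemma dGH_sym_le (X Y : CMS) : dGH X Y <= dGH Y X.
Proof.
  apply Rle_plus_epsilon; intros eps He.
  destruct (dGH_near_optimal Y X (2 * eps) ltac:(lra)) as (C & [HY HX] & HC).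
  enough (dGH X Y <= (2 * dGH Y X + 2 * eps) / 2) by lra.
  apply (dGH_le_of_surjections X Y {p : Y * X | C (fst p) (snd p)}
           (fun p => snd (proj1_sig p)) (fun p => fst (proj1_sig p))).
  - intro x. destruct (HX x) as [y Hy]. exists (exist _ (y, x) Hy); reflexivity.
  - intro y. destruct (HY y) as [x Hx]. exists (exist _ (y, x) Hx); reflexivity.
  - intros [[y x] h] [[y' x'] h']; simpl in *. rewrite Rabs_minus_sym. auto.
Qed.

Lemma dGH_sym (X Y : CMS) : dGH X Y = dGH Y X.
Proof. apply Rle_antisym; apply dGH_sym_le. Qed.

Lemma dGH_triangle (X Y Z : CMS) : dGH X Z <= dGH X Y + dGH Y Z.
Proof.
  apply Rle_plus_epsilon; intros eps He.
  destruct (dGH_near_optimal X Y eps He) as (C1 & [HX1 HY1] & HC1).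
  destruct (dGH_near_optimal Y Z eps He) as (C2 & [HY2 HZ2] & HC2).
  enough (dGH X Z <= (2 * dGH X Y + eps + (2 * dGH Y Z + eps)) / 2) by lra.
  apply (dGH_le_of_surjections X Z
           {p : X * Y * Z | C1 (fst (fst p)) (snd (fst p)) /\ C2 (snd (fst p)) (snd p)}
           (fun p => fst (fst (proj1_sig p))) (fun p => snd (proj1_sig p))).
  - intro x. destruct (HX1 x) as [y Hy]. destruct (HY2 y) as [z Hz].
    exists (exist _ (x, y, z) (conj Hy Hz)); reflexivity.
  - intro z. destruct (HZ2 z) as [y Hy]. destruct (HY1 y) as [x Hx].
    exists (exist _ (x, y, z) (conj Hx Hy)); reflexivity.
  - intros [[[x y] z] [h1 h2]] [[[x' y'] z'] [h1' h2']]; simpl in *.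
    specialize (HC1 _ _ _ _ h1 h1'); specialize (HC2 _ _ _ _ h2 h2').
    replace (dist x x' - dist z z')
      with ((dist x x' - dist y y') + (dist y y' - dist z z')) by ring.
    eapply Rle_trans; [apply Rabs_triang|]. lra.
Qed.

Definition rel_closed (X Y : CMS) (C : X -> Y -> Prop) : Prop :=
  forall xs ys x y, (forall n, C (xs n) (ys n)) -> converges X xs x -> converges Y ys y -> C x y.

Definition lower_limit {X Y : CMS} (Q : nat -> X -> Y -> Prop) (x : X) (y : Y) : Prop :=
  forall eps, eps > 0 -> exists N, forall n, (n >= N)%nat ->
    exists x' y', Q n x' y' /\ dist x x' < eps /\ dist y y' < eps.

Lemma lower_limit_closed (X Y : CMS) (Q : nat -> X -> Y -> Prop) : rel_closed X Y (lower_limit Q).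
Proof.
  intros xs ys x y Hlim Hx Hy eps He.
  destruct (Hx (eps / 2) ltac:(lra)) as [N1 H1]. destruct (Hy (eps / 2) ltac:(lra)) as [N2 H2].
  set (k := max N1 N2). destruct (Hlim k (eps / 2) ltac:(lra)) as [N HN].
  exists N; intros n Hn. destruct (HN n Hn) as (x' & y' & HQ & Hdx & Hdy).
  exists x', y'; split; [exact HQ|]. specialize (H1 k ltac:(lia)); specialize (H2 k ltac:(lia)).
  pose proof (dist_tri_sym X x (xs k) x'); pose proof (dist_tri_sym Y y (ys k) y'). lra.
Qed.

Lemma lower_limit_swap (X Y : CMS) (Q : nat -> X -> Y -> Prop) x y :
  lower_limit (fun n y x => Q n x y) y x -> lower_limit Q x y.
Proof.
  intros H eps He. destruct (H eps He) as [N HN]. exists N; intros n Hn.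
  destruct (HN n Hn) as (y' & x' & HQ & Hy & Hx). exists x', y'; auto.
Qed.

(* Every point of [X] is close to some [a i], whose partners [yy n i] converge;
   a cluster point of those limits is a partner of [x] in the lower limit. *)
Lemma lower_limit_total (X Y : CMS) (Q : nat -> X -> Y -> Prop) (a : nat -> X)
    (yy : nat -> nat -> Y) (ylim : nat -> Y) :
  (forall x eps, eps > 0 -> exists i, dist x (a i) < eps) ->
  (forall n i, Q n (a i) (yy n i)) ->
  (forall i, converges Y (fun n => yy n i) (ylim i)) ->
  forall x, exists y, lower_limit Q x y.
Proof.
  intros Hdense HQ Hylim x.
  destruct (choice _ (fun k : nat => Hdense x _ (inv_INR_succ_pos k))) as [idx Hidx].
  destruct (cms_compact Y (fun k => ylim (idx k))) as (phi & y & Hphi & Hy).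
  exists y; intros eps He.
  destruct (Hy (eps / 3) ltac:(lra)) as [N1 H1].
  destruct (eventually_inv_INR_succ_lt (eps / 3) ltac:(lra)) as [N2 H2].
  set (k := max N1 N2).
  specialize (H1 k ltac:(lia)).
  specialize (H2 (phi k) ltac:(pose proof (strictly_increasing_ge phi Hphi k); lia)).
  specialize (Hidx (phi k)). set (i := idx (phi k)) in *.
  destruct (Hylim i (eps / 3) ltac:(lra)) as [N HN].
  exists N; intros n Hn. exists (a i), (yy n i). split; [apply HQ|split; [lra|]].
  specialize (HN n Hn).
  pose proof (dist_tri_sym Y y (ylim i) (yy n i)). rewrite (dist_sym Y (yy n i)) in HN. lra.
Qed.

Lemma lower_limit_distortion_le (X Y : CMS) (Q : nat -> X -> Y -> Prop) D :
  (forall n x y x' y', Q n x y -> Q n x' y' ->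
     Rabs (dist x x' - dist y y') <= D + / (INR n + 1)) ->
  forall x y x' y', lower_limit Q x y -> lower_limit Q x' y' ->
    Rabs (dist x x' - dist y y') <= D.
Proof.
  intros HQ x y x' y' H H'. apply Rle_plus_epsilon; intros eta Heta.
  destruct (H (eta / 8) ltac:(lra)) as [N1 HN1]. destruct (H' (eta / 8) ltac:(lra)) as [N2 HN2].
  destruct (eventually_inv_INR_succ_lt (eta / 4) ltac:(lra)) as [N3 HN3].
  set (n := max N1 (max N2 N3)).
  destruct (HN1 n ltac:(lia)) as (p & q & Hpq & Hp & Hq).
  destruct (HN2 n ltac:(lia)) as (p' & q' & Hpq' & Hp' & Hq').
  pose proof (HQ n p q p' q' Hpq Hpq'). specialize (HN3 n ltac:(lia)).
  pose proof (Rabs_dist_sub_le X x x' p p'); pose proof (Rabs_dist_sub_le Y y y' q q').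
  replace (dist x x' - dist y y') with
    ((dist x x' - dist p p') + (dist p p' - dist q q') - (dist y y' - dist q q')) by ring.
  eapply Rle_trans; [apply Rabs_triang|]. rewrite Rabs_Ropp.
  eapply Rle_trans; [apply Rplus_le_compat_r, Rabs_triang|]. lra.
Qed.

(* The lower limit of near-optimal correspondences along a diagonal subsequence,
   chosen so that the partners of two dense sequences converge. *)
Lemma optimal_correspondence (X Y : CMS) : exists C, correspondence X Y C /\ rel_closed X Y C /\
  forall x y x' y', C x y -> C x' y' -> Rabs (dist x x' - dist y y') <= 2 * dGH X Y.
Proof.
  destruct (choice _ (fun n : nat => dGH_near_optimal X Y _ (inv_INR_succ_pos n)))
    as [Q HQ].
  destruct (cms_dense_seq X) as [a Ha]. destruct (cms_dense_seq Y) as [b Hb].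
  destruct (choice _ (fun p : nat * nat => proj1 (proj1 (HQ (fst p))) (a (snd p)))) as [yy Hyy].
  destruct (choice _ (fun p : nat * nat => proj2 (proj1 (HQ (fst p))) (b (snd p)))) as [xx Hxx].
  destruct (diagonal_extraction Y (fun i n => yy (n, i))) as (e1 & ylim & He1 & Hylim).
  destruct (diagonal_extraction X (fun j n => xx (e1 n, j))) as (e2 & xlim & He2 & Hxlim).
  set (e := fun n => e1 (e2 n)).
  assert (He : forall n, (n <= e n)%nat)
    by (intro n; specialize (He1 (e2 n)); specialize (He2 n); unfold e; lia).
  exists (lower_limit (fun n => Q (e n))).
  split; [split|split].
  - apply (lower_limit_total X Y _ a (fun n i => yy (e n, i)) ylim Ha (fun n i => Hyy (e n, i))).
    intro i. exact (converges_subseq Y _ _ e2 (Hylim i) He2).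
  - intro y. destruct (lower_limit_total Y X (fun n y x => Q (e n) x y) b (fun n j => xx (e n, j))
                         xlim Hb (fun n j => Hxx (e n, j)) Hxlim y) as [x Hx].
    exists x. apply lower_limit_swap, Hx.
  - apply lower_limit_closed.
  - apply lower_limit_distortion_le. intros n x y x' y' H H'.
    pose proof (proj2 (HQ (e n)) x y x' y' H H').
    enough (/ (INR (e n) + 1) <= / (INR n + 1)) by lra.
    apply Rinv_le_contravar; [pose proof (pos_INR n); lra|].
    apply Rplus_le_compat_r, le_INR, He.
Qed.

Definition graph {X Y : CMS} (C : X -> Y -> Prop) : Type := {p : X * Y | C (fst p) (snd p)}.

Definition gfst {X Y : CMS} {C : X -> Y -> Prop} (p : graph C) : X := fst (proj1_sig p).
Definition gsnd {X Y : CMS} {C : X -> Y -> Prop} (p : graph C) : Y := snd (proj1_sig p).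

Definition interp_dist {X Y : CMS} (C : X -> Y -> Prop) (t : R) (p q : graph C) : R :=
  (1 - t) * dist (gfst p) (gfst q) + t * dist (gsnd p) (gsnd q).

Section Interpolation.

Variables (X Y : CMS) (C : X -> Y -> Prop) (t : R).
Hypothesis ht : 0 < t < 1.
Hypothesis HC : correspondence X Y C.
Hypothesis HCcl : rel_closed X Y C.

Lemma interp_dist_nonneg p q : 0 <= interp_dist C t p q.
Proof.
  unfold interp_dist. pose proof (dist_nonneg X (gfst p) (gfst q)).
  pose proof (dist_nonneg Y (gsnd p) (gsnd q)).
  apply Rplus_le_le_0_compat; apply Rmult_le_pos; lra.
Qed.

Lemma interp_dist_eq0 p q : interp_dist C t p q = 0 <-> p = q.
Proof.
  destruct p as [[x y] hp], q as [[x' y'] hq]; unfold interp_dist, gfst, gsnd; simpl.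
  pose proof (dist_nonneg X x x'); pose proof (dist_nonneg Y y y').
  split.
  - intro Hzero.
    assert (Hx : dist x x' = 0) by nra. assert (Hy : dist y y' = 0) by nra.
    apply (dist_eq0 X) in Hx; apply (dist_eq0 Y) in Hy. subst. apply subset_eq_compat; reflexivity.
  - intro E. inversion E; subst.
    rewrite (proj2 (dist_eq0 X x' x') eq_refl), (proj2 (dist_eq0 Y y' y') eq_refl). ring.
Qed.

Lemma interp_dist_sym p q : interp_dist C t p q = interp_dist C t q p.
Proof. unfold interp_dist; rewrite (dist_sym X), (dist_sym Y); reflexivity. Qed.

Lemma interp_dist_tri p q r : interp_dist C t p r <= interp_dist C t p q + interp_dist C t q r.
Proof.
  unfold interp_dist.
  pose proof (dist_tri X (gfst p) (gfst q) (gfst r)).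
  pose proof (dist_tri Y (gsnd p) (gsnd q) (gsnd r)).
  nra.
Qed.

Lemma graph_inhabited : inhabited (graph C).
Proof.
  destruct (cms_inhabited X) as [x]. destruct (proj1 HC x) as [y Hy].
  exact (inhabits (exist _ (x, y) Hy)).
Qed.

(* Extract in [X], then in [Y]; closedness of [C] keeps the limit in the graph. *)
Lemma graph_compact (u : nat -> graph C) : exists (phi : nat -> nat) (l : graph C),
  strictly_increasing phi /\ forall eps, eps > 0 -> exists N, forall n, (n >= N)%nat ->
    interp_dist C t (u (phi n)) l < eps.
Proof.
  destruct (cms_compact X (fun n => gfst (u n))) as (phi1 & x & Hphi1 & Hx).
  destruct (cms_compact Y (fun n => gsnd (u (phi1 n)))) as (phi2 & y & Hphi2 & Hy).
  assert (Hx2 : converges X (fun n => gfst (u (phi1 (phi2 n)))) x).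
  { apply (converges_subseq X (fun n => gfst (u (phi1 n))) x phi2 Hx).
    exact (strictly_increasing_ge _ Hphi2). }
  assert (Hxy : C x y).
  { apply (HCcl (fun n => gfst (u (phi1 (phi2 n)))) (fun n => gsnd (u (phi1 (phi2 n))))); auto.
    intro n. exact (proj2_sig (u (phi1 (phi2 n)))). }
  exists (fun n => phi1 (phi2 n)), (exist _ (x, y) Hxy).
  split; [apply strictly_increasing_comp; auto|].
  intros eps He. destruct (Hx2 eps He) as [N1 H1]. destruct (Hy eps He) as [N2 H2].
  exists (max N1 N2); intros n Hn. specialize (H1 n ltac:(lia)); specialize (H2 n ltac:(lia)).
  unfold interp_dist, gfst, gsnd in *; simpl in *. nra.
Qed.

Definition interp_space : CMS :=
  Build_CMS (graph C) (interp_dist C t) interp_dist_nonneg interp_dist_eq0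
    interp_dist_sym interp_dist_tri graph_inhabited graph_compact.

End Interpolation.

Definition interpolates {X Y : CMS} (C : X -> Y -> Prop) (A : CMS) (s : R) : Prop :=
  exists f : graph C -> A, (forall a, exists p, f p = a) /\
    forall p q, dist (f p) (f q) = interp_dist C s p q.

Lemma interpolates_left (X Y : CMS) (C : X -> Y -> Prop) :
  correspondence X Y C -> interpolates C X 0.
Proof.
  intros [HX _]. exists gfst. split.
  - intro x. destruct (HX x) as [y Hy]. exists (exist _ (x, y) Hy); reflexivity.
  - intros p q; unfold interp_dist; ring.
Qed.

Lemma interpolates_right (X Y : CMS) (C : X -> Y -> Prop) :
  correspondence X Y C -> interpolates C Y 1.
Proof.
  intros [_ HY]. exists gsnd. split.
  - intro y. destruct (HY y) as [x Hx]. exists (exist _ (x, y) Hx); reflexivity.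
  - intros p q; unfold interp_dist; ring.
Qed.

(* The endpoints are [X] and [Y] themselves, since [interp_dist C 0] and [interp_dist C 1]
   are only pseudometrics on the graph. *)
Definition geodesic (X Y : CMS) (C : X -> Y -> Prop) (HC : correspondence X Y C)
    (HCcl : rel_closed X Y C) (t : R) : CMS :=
  match Rle_dec t 0 with
  | left _ => X
  | right h0 =>
      match Rle_dec 1 t with
      | left _ => Y
      | right h1 => interp_space X Y C t (conj (Rnot_le_lt _ _ h0) (Rnot_le_lt _ _ h1)) HC HCcl
      end
  end.

Section Geodesic.

Variables (X Y : CMS) (C : X -> Y -> Prop).
Hypothesis HC : correspondence X Y C.
Hypothesis HCcl : rel_closed X Y C.

Lemma geodesic_at_0 : geodesic X Y C HC HCcl 0 = X.
Proof. unfold geodesic; destruct (Rle_dec 0 0); [reflexivity | exfalso; lra]. Qed.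

Lemma geodesic_at_1 : geodesic X Y C HC HCcl 1 = Y.
Proof.
  unfold geodesic; destruct (Rle_dec 1 0); [exfalso; lra|].
  destruct (Rle_dec 1 1); [reflexivity | exfalso; lra].
Qed.

Lemma interpolates_geodesic s : 0 <= s <= 1 -> interpolates C (geodesic X Y C HC HCcl s) s.
Proof.
  intros Hs. unfold geodesic. destruct (Rle_dec s 0) as [h0|h0].
  - replace s with 0 by lra. apply interpolates_left, HC.
  - destruct (Rle_dec 1 s) as [h1|h1].
    + replace s with 1 by lra. apply interpolates_right, HC.
    + exists (fun p => p). split; [intro p; exists p|]; reflexivity.
Qed.

End Geodesic.

Lemma dGH_interpolates_le (X Y : CMS) (C : X -> Y -> Prop) (A B : CMS) s t D :
  (forall x y x' y', C x y -> C x' y' -> Rabs (dist x x' - dist y y') <= 2 * D) ->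
  interpolates C A s -> interpolates C B t -> dGH A B <= Rabs (t - s) * D.
Proof.
  intros HD (f & Hf & Ef) (g & Hg & Eg).
  enough (dGH A B <= Rabs (t - s) * (2 * D) / 2) by lra.
  apply (dGH_le_of_surjections A B (graph C) f g); auto.
  intros p q. rewrite Ef, Eg. unfold interp_dist.
  replace ((1 - s) * dist (gfst p) (gfst q) + s * dist (gsnd p) (gsnd q) -
           ((1 - t) * dist (gfst p) (gfst q) + t * dist (gsnd p) (gsnd q)))
    with ((t - s) * (dist (gfst p) (gfst q) - dist (gsnd p) (gsnd q))) by ring.
  rewrite Rabs_mult. apply Rmult_le_compat_l; [apply Rabs_pos|].
  apply HD; [exact (proj2_sig p) | exact (proj2_sig q)].
Qed.

(* The upper bound comes from interpolation; the lower bound from the triangle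
   inequality along X, gamma s, gamma t, Y. *)
Lemma dGH_geodesic (X Y : CMS) (C : X -> Y -> Prop)
    (HC : correspondence X Y C) (HCcl : rel_closed X Y C) :
  (forall x y x' y', C x y -> C x' y' -> Rabs (dist x x' - dist y y') <= 2 * dGH X Y) ->
  forall s t, 0 <= s <= 1 -> 0 <= t <= 1 ->
    dGH (geodesic X Y C HC HCcl s) (geodesic X Y C HC HCcl t) = Rabs (t - s) * dGH X Y.
Proof.
  intros Hopt.
  set (gamma := geodesic X Y C HC HCcl).
  assert (Hup : forall s t, 0 <= s <= 1 -> 0 <= t <= 1 ->
            dGH (gamma s) (gamma t) <= Rabs (t - s) * dGH X Y).
  { intros s t Hs Ht. apply (dGH_interpolates_le X Y C); auto; apply interpolates_geodesic; auto. }
  assert (Hlow : forall s t, 0 <= s -> s <= t -> t <= 1 ->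
            (t - s) * dGH X Y <= dGH (gamma s) (gamma t)).
  { intros s t Hs Hst Ht.
    pose proof (dGH_triangle X (gamma s) Y); pose proof (dGH_triangle (gamma s) (gamma t) Y).
    pose proof (dGH_interpolates_le X Y C X (gamma s) 0 s (dGH X Y) Hopt
                  (interpolates_left X Y C HC) (interpolates_geodesic X Y C HC HCcl s ltac:(lra))).
    pose proof (dGH_interpolates_le X Y C (gamma t) Y t 1 (dGH X Y) Hopt
                  (interpolates_geodesic X Y C HC HCcl t ltac:(lra)) (interpolates_right X Y C HC)).
    rewrite Rabs_right in * by lra. lra. }
  intros s t Hs Ht. apply Rle_antisym; [apply Hup; auto|].
  destruct (Rle_dec s t).
  - rewrite Rabs_right by lra. apply Hlow; lra.
  - rewrite Rabs_left, (dGH_sym (gamma s)) by lra.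
    replace (- (t - s) * dGH X Y) with ((s - t) * dGH X Y) by ring.
    apply Hlow; lra.
Qed.

Lemma isometric_refl (X : CMS) : isometric X X.
Proof. exists (fun x => x). split; [reflexivity | intro x; exists x; reflexivity]. Qed.

Theorem mainTheorem3 (X Y : CMS) :
  exists gamma : R -> CMS,
    isometric (gamma 0) X /\ isometric (gamma 1) Y /\
    (forall s, 0 <= s <= 1 -> forall eps, eps > 0 ->
       exists delta, delta > 0 /\
         forall t, 0 <= t <= 1 -> Rabs (t - s) < delta ->
           dGH (gamma s) (gamma t) < eps) /\
    (forall s t, 0 <= s <= 1 -> 0 <= t <= 1 ->
       dGH (gamma s) (gamma t) = Rabs (t - s) * dGH X Y).
Proof.
  destruct (optimal_correspondence X Y) as (C & HC & HCcl & Hopt).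
  pose proof (dGH_geodesic X Y C HC HCcl Hopt) as Hgeo.
  exists (geodesic X Y C HC HCcl).
  split; [rewrite geodesic_at_0; apply isometric_refl|].
  split; [rewrite geodesic_at_1; apply isometric_refl|].
  split; [|exact Hgeo].
  intros s Hs eps He. pose proof (dGH_nonneg X Y) as Hd.
  exists (eps / (dGH X Y + 1)). split; [apply Rdiv_lt_0_compat; lra|].
  intros t Ht Hts. rewrite Hgeo by assumption.
  apply Rle_lt_trans with (Rabs (t - s) * (dGH X Y + 1)); [pose proof (Rabs_pos (t - s)); nra|].
  replace eps with (eps / (dGH X Y + 1) * (dGH X Y + 1)) by (field; lra).
  apply Rmult_lt_compat_r; lra.
Qed.
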